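(* Let $\mathcal{H}=(V,E)$ be a linear hypergraph such that for every hyperedge $e\in E$ there exists a vertex $x\in e$ with $\mathrm{deg}_{\mathcal{H}}(x)\le |e|$. Then $$\mathrm{q}(\mathcal{H})\le \Delta([\mathcal{H}]_2)+1.$$
   Context: A hypergraph $\mathcal{H}=(V,E)$ has a finite vertex set $V$ and a finite set $E$ of nonempty subsets of $V$ (hyperedges). It is linear if $|e\cap e'|\le 1$ for all distinct $e,e'\in E$. The degree $\mathrm{deg}_{\mathcal{H}}(x)$ of a vertex $x$ is the number of hyperedges containing $x$. The 2-section $[\mathcal{H}]_2$ is the simple graph on $V$ in which two distinct vertices are adjacent iff some hyperedge contains both; $\Delta([\mathcal{H}]_2)$ is its maximum degree. The chromatic index $\mathrm{q}(\mathcal{H})$ is the least $k$ such that the hyperedges can be colored with $k$ colors so that any two distinct intersecting hyperedges receive different colors. *)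

From mathcomp Require Import all_boot.
Set Implicit Arguments. Unset Strict Implicit. Unset Printing Implicit Defensive.

Definition hypergraph (V : finType) (E : {set {set V}}) : Prop :=
  forall e, e \in E -> e != set0.

Definition linear (V : finType) (E : {set {set V}}) : Prop :=
  forall e e', e \in E -> e' \in E -> e != e' -> #|e :&: e'| <= 1.

Definition hdeg (V : finType) (E : {set {set V}}) (x : V) : nat :=
  #|[set e in E | x \in e]|.

Definition sec2_nbhd (V : finType) (E : {set {set V}}) (x : V) : {set V} :=
  [set y | (y != x) && [exists e in E, (x \in e) && (y \in e)]].

(* maximum degree of the 2-section (0 if V is empty) *)
Definition sec2_maxdeg (V : finType) (E : {set {set V}}) : nat :=
  \max_(x : V) #|sec2_nbhd E x|.

(* boolean version: a colouring {set V} -> 'I_k (values off E are irrelevant) *)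
Definition colorableb (V : finType) (E : {set {set V}}) (k : nat) : bool :=
  [exists c : {ffun {set V} -> 'I_k},
     [forall e in E, forall e' in E,
        (e != e') ==> (e :&: e' != set0) ==> (c e != c e')]].

Lemma colorable_ex (V : finType) (E : {set {set V}}) :
  exists k, colorableb E k.
Proof.
exists #|{set V}|; apply/existsP; exists [ffun e => enum_rank e].
apply/forallP => e; apply/implyP => _; apply/forallP => e'; apply/implyP => _.
apply/implyP => ne; apply/implyP => _; rewrite !ffunE.
by apply: contra ne => /eqP /enum_rank_inj ->.
Qed.

Definition chromatic_index (V : finType) (E : {set {set V}}) : nat :=
  ex_minn (colorable_ex E).

From mathcomp Require Import all_boot zify.
Set Implicit Arguments. Unset Strict Implicit. Unset Printing Implicit Defensive.

(* Greedy colouring. Remove an edge e of minimum size s and colour the rest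
   by induction with D + 1 colours, D the maximum degree of the 2-section.
   The edge e meets at most sum_(y in e) (deg y - 1) other edges. By
   linearity the sets f \ y, for the edges f through y, are disjoint subsets
   of the 2-section neighbourhood of y, whence (s - 1) deg y <= D. For the
   vertex x of e with deg x <= s this bounds the sum by
   (s - 1) + (s - 1) (D / (s - 1) - 1) = D, so a colour is left for e. *)

Section CardBigcup.
Variables (I T : finType).
Implicit Types (P : {set I}) (F : I -> {set T}).

Lemma leq_card_bigcup P F : #|\bigcup_(i in P) F i| <= \sum_(i in P) #|F i|.
Proof.
elim/big_rec2: _ => [|i n U _ leUn]; first by rewrite cards0.
by rewrite (leq_trans (leq_card_setU _ U).1) ?leq_add2l.
Qed.

Lemma card_bigcup_disjoint P F :
  {in P &, forall i j, i != j -> [disjoint F i & F j]} ->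
  #|\bigcup_(i in P) F i| = \sum_(i in P) #|F i|.
Proof.
elim: {P}_.+1 {-2}P (ltnSn #|P|) => // n IHn P ltPn disjF.
have [-> | [i iP]] := set_0Vmem P; first by rewrite !big_set0 cards0.
rewrite !(big_setD1 i iP) /= cardsU disjoint_setI0 ?cards0 ?subn0.
  rewrite IHn //; first by rewrite (cardsD1 i P) iP in ltPn.
  by move=> j k /setD1P[_ jP] /setD1P[_ kP]; apply: disjF.
apply: bigcup_disjoint => j /setD1P[ji jP].
by apply: disjF; rewrite // eq_sym.
Qed.

End CardBigcup.

Lemma sum_predn_le (T : finType) (A : {set T}) (d : T -> nat) (x : T) (D : nat) :
  x \in A -> 0 < d x <= #|A| -> {in A, forall y, #|A|.-1 * d y <= D} ->
  \sum_(y in A) (d y).-1 <= D.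
Proof.
move=> xA /andP[dx_gt0 dx_le] dD; rewrite (big_setD1 x xA) /=.
have cardA : #|A :\ x| = #|A|.-1 by rewrite (cardsD1 x A) xA.
have sD : #|A|.-1 <= D by apply: leq_trans (dD x xA); rewrite leq_pmulr.
have [A1 | A_gt1] := leqP #|A| 1.
  have -> : A :\ x = set0 by apply/eqP; rewrite -cards_eq0 cardA; lia.
  rewrite big_set0; lia.
suff : \sum_(y in A :\ x) (d y).-1 <= D - #|A|.-1 by lia.
rewrite -(@leq_pmul2l #|A|.-1) ?big_distrr /=; last lia.
apply: (@leq_trans (\sum_(y in A :\ x) (D - #|A|.-1))); last first.
  by rewrite sum_nat_const cardA mulnC.
apply: leq_sum => y /setD1P[_ yA]; have := dD y yA; nia.
Qed.

Section Hypergraph.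
Variables (V : finType) (E : {set {set V}}).

Definition star (y : V) : {set {set V}} := [set f in E | y \in f].

Definition edge_nbhd (e : {set V}) : {set {set V}} :=
  [set f in E | (f != e) && (f :&: e != set0)].

Lemma hdeg_gt0 e y : e \in E -> y \in e -> 0 < hdeg E y.
Proof. by move=> eE ye; apply/card_gt0P; exists e; rewrite inE eE ye. Qed.

Lemma card_sec2_nbhd_le y : #|sec2_nbhd E y| <= sec2_maxdeg E.
Proof. exact: leq_bigmax. Qed.

Lemma card_edge_nbhd_le e :
  e \in E -> #|edge_nbhd e| <= \sum_(y in e) (hdeg E y).-1.
Proof.
move=> eE; have cover_nbhd : edge_nbhd e \subset \bigcup_(y in e) (star y :\ e).
  apply/subsetP => f /setIdP[fE /andP[fe /set0Pn[y /setIP[yf ye]]]].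
  by apply/bigcupP; exists y; rewrite // !inE fe fE yf.
apply: leq_trans (subset_leq_card cover_nbhd) _.
apply: leq_trans (leq_card_bigcup _ _) _; apply: leq_sum => y ye.
by rewrite [hdeg E y](cardsD1 e) inE eE ye.
Qed.

Hypothesis linE : linear E.

Lemma sum_card_star_le y : \sum_(f in star y) #|f :\ y| <= #|sec2_nbhd E y|.
Proof.
rewrite -card_bigcup_disjoint; last first.
  move=> f f' /setIdP[fE yf] /setIdP[f'E yf'] ff'; rewrite -setI_eq0.
  apply/set0Pn => -[z /setIP[/setD1P[zy zf] /setD1P[_ zf']]].
  have := linE fE f'E ff'; apply/negP; rewrite -ltnNge.
  have sub2 : [set y; z] \subset f :&: f' by rewrite subUset !sub1set !inE yf yf' zf zf'.
  by apply: leq_trans (subset_leq_card sub2); rewrite cards2 eq_sym zy.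
apply/subset_leq_card/bigcupsP => f /setIdP[fE yf]; apply/subsetP => z /setD1P[zy zf].
by rewrite inE zy; apply/existsP; exists f; rewrite fE yf zf.
Qed.

Lemma mul_hdeg_le_maxdeg (s : nat) y :
  {in E, forall f : {set V}, s <= #|f|} -> s.-1 * hdeg E y <= sec2_maxdeg E.
Proof.
move=> sE; apply: leq_trans (card_sec2_nbhd_le y).
apply: leq_trans (sum_card_star_le y); rewrite mulnC -sum_nat_const.
apply: leq_sum => f /setIdP[fE yf].
by have := sE f fE; rewrite [#|f|](cardsD1 y) yf add1n; lia.
Qed.

Lemma card_edge_nbhd_le_maxdeg e x :
  e \in E -> {in E, forall f : {set V}, #|e| <= #|f|} -> x \in e -> hdeg E x <= #|e| ->
  #|edge_nbhd e| <= sec2_maxdeg E.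
Proof.
move=> eE emin xe dx; apply: leq_trans (card_edge_nbhd_le eE) _.
apply: (sum_predn_le xe); first by rewrite (hdeg_gt0 eE xe).
by move=> y _; apply: mul_hdeg_le_maxdeg.
Qed.

End Hypergraph.

Definition low_degree_vertices (V : finType) (E : {set {set V}}) : Prop :=
  forall e, e \in E -> exists2 x, x \in e & hdeg E x <= #|e|.

Section Subhypergraph.
Variables (V : finType) (E E' : {set {set V}}).
Hypothesis subE : E' \subset E.

Lemma linearS : linear E -> linear E'.
Proof. by move=> linE f f' /(subsetP subE) fE /(subsetP subE); apply: linE. Qed.

Lemma hdegS x : hdeg E' x <= hdeg E x.
Proof.
by apply/subset_leq_card/subsetP => f /setIdP[/(subsetP subE) fE xf]; rewrite inE fE.
Qed.

Lemma low_degree_verticesS : low_degree_vertices E -> low_degree_vertices E'.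
Proof.
move=> lowE e /(subsetP subE) /lowE[x xe dx].
by exists x => //; apply: leq_trans dx; apply: hdegS.
Qed.

Lemma sec2_maxdegS : sec2_maxdeg E' <= sec2_maxdeg E.
Proof.
apply/bigmax_leqP => y _; apply: leq_trans (card_sec2_nbhd_le E y).
apply/subset_leq_card/subsetP => z /setIdP[zy /exists_inP[f f'E yzf]].
by rewrite inE zy; apply/exists_inP; exists f; rewrite ?(subsetP subE).
Qed.

End Subhypergraph.

Section Coloring.
Variables (V : finType) (k : nat).
Implicit Type E : {set {set V}}.

Definition proper_coloring E (c : {ffun {set V} -> 'I_k}) : Prop :=
  {in E &, forall e e', e != e' -> e :&: e' != set0 -> c e != c e'}.

Lemma colorableP E : reflect (exists c, proper_coloring E c) (colorableb E k).
Proof.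
apply: (iffP existsP) => -[c Hc]; exists c.
  move=> e e' eE e'E ne meet.
  by move/forall_inP/(_ e eE)/forall_inP/(_ e' e'E): Hc; rewrite ne meet.
apply/forall_inP => e eE; apply/forall_inP => e' e'E.
by apply/implyP => ne; apply/implyP; apply: Hc.
Qed.

Lemma colorable0 : 0 < k -> colorableb (set0 : {set {set V}}) k.
Proof.
by move=> k_gt0; apply/colorableP; exists [ffun=> Ordinal k_gt0] => e; rewrite inE.
Qed.

Lemma colorableD1 E e :
  #|edge_nbhd E e| < k -> colorableb (E :\ e) k -> colorableb E k.
Proof.
move=> nbhd_lt /colorableP[c c_proper].
have [a a_free] : exists a, a \notin c @: edge_nbhd E e.
  apply/existsP; rewrite -negb_forall; apply: contraTN nbhd_lt => /forallP all_used.
  rewrite -leqNgt -[k]card_ord (leq_trans _ (leq_imset_card c _)) //.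
  by apply/subset_leq_card/subsetP => b _; apply: all_used.
apply/colorableP; exists [ffun f => if f == e then a else c f].
have used f f' : f \in E -> f' = e -> f != f' -> f :&: f' != set0 ->
    c f \in c @: edge_nbhd E e.
  by move=> fE -> ne meet; rewrite imset_f // inE fE ne.
move=> f f' fE f'E ne meet; rewrite !ffunE.
have [fe | fe] := eqVneq f e; have [f'e | f'e] := eqVneq f' e.
- by rewrite fe f'e eqxx in ne.
- apply: contraNneq a_free => ->; apply: (used _ f) => //; first by rewrite eq_sym.
  by rewrite setIC.
- by apply: contraNneq a_free => <-; apply: (used f f').
- by apply: c_proper; rewrite // !inE ?fe ?f'e.
Qed.

End Coloring.

Lemma chromatic_index_le (V : finType) (E : {set {set V}}) k :
  colorableb E k -> chromatic_index E <= k.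
Proof. by rewrite /chromatic_index; case: ex_minnP => m _; apply. Qed.

Lemma colorable_low_degree (V : finType) (E : {set {set V}}) k :
  linear E -> low_degree_vertices E -> sec2_maxdeg E < k -> colorableb E k.
Proof.
elim: {E}_.+1 {-2}E (ltnSn #|E|) => // n IHn E ltEn linE lowE maxdeg_lt.
have [-> | [e0 e0E]] := set_0Vmem E.
  exact: colorable0 (leq_ltn_trans (leq0n _) maxdeg_lt).
case: (arg_minnP (fun f : {set V} => #|f|) e0E) => e eE emin.
have subE : E :\ e \subset E by apply: subsetDl.
have [x xe dx] := lowE e eE.
apply: (@colorableD1 _ _ _ e).
  exact: leq_ltn_trans (card_edge_nbhd_le_maxdeg linE eE emin xe dx) maxdeg_lt.
apply: IHn; first by rewrite (cardsD1 e E) (eE : e \in E) in ltEn.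
- exact: linearS linE.
- exact: low_degree_verticesS lowE.
- exact: leq_ltn_trans (sec2_maxdegS subE) maxdeg_lt.
Qed.

Theorem theorem1p5 (V : finType) (E : {set {set V}}) :
  hypergraph E ->
  linear E ->
  (forall e, e \in E -> exists2 x, x \in e & hdeg E x <= #|e|) ->
  chromatic_index E <= sec2_maxdeg E + 1.
Proof.
move=> _ linE lowE; apply: chromatic_index_le.
by apply: colorable_low_degree; rewrite ?addn1.
Qed.
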